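(* Let $G$ be a finite solvable, non-nilpotent group of Fitting length $d$. Then there are normal subgroups $K\trianglelefteq G$ and $H\trianglelefteq G$ with $K\le H\neq G$, $\mathrm{FitL}(K)=d-1$ and $\mathcal{U}_{d-1}G\le H$, such that for all $g\in G\setminus H$ we have $\eta_g(K)=K$, and for all $h\in H$ we have $\mathrm{FitL}(\eta_h(K))<\mathrm{FitL}(K)$.
   Context: Commutators: $[x,y]=x^{-1}y^{-1}xy$, $x^y=y^{-1}xy$; for subsets $X,Y\subseteq G$, $[X,Y]$ is the subgroup generated by all $[x,y]$, $x\in X$, $y\in Y$, and $[X,{}_kY]=[\cdots[[X,Y],Y]\cdots,Y]$ with $k$ copies of $Y$. $g^G=\{g^x:x\in G\}$. Fix $M\in\mathbb{N}$ such that $[X,{}_MY]=[X,{}_iY]$ for all $i\ge M$ and all $X,Y\subseteq G$ with $X^G=X$, $Y^G=Y$ (e.g. $M=\lvert G\rvert$). For $K\trianglelefteq G$ and $g\in G$, $\eta_g(K)=[K,{}_M\,g^G]$. $\mathrm{Fit}(G)$ is the largest nilpotent normal subgroup; the upper Fitting series is $\mathcal{U}_0G=1$, $\mathcal{U}_{i+1}G/\mathcal{U}_iG=\mathrm{Fit}(G/\mathcal{U}_iG)$; the Fitting length $\mathrm{FitL}$ of a solvable group is the least $d$ with $\mathcal{U}_dG=G$. *)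

From mathcomp Require Import all_boot all_fingroup all_solvable.
Set Implicit Arguments.
Unset Strict Implicit.
Unset Printing Implicit Defensive.
Local Open Scope group_scope.

Section Defs.
Variable gT : finGroupType.
Implicit Types (X Y G : {set gT}).

Fixpoint itercomm X Y (k : nat) : {set gT} :=
  if k is k'.+1 then [~: itercomm X Y k', Y] else X.

Definition Gnormal_set G X := (X \subset G) && (G \subset 'N(X)).

Definition eta (M : nat) G (g : gT) (K : {set gT}) := itercomm K (g ^: G) M.

(* Upper Fitting series: U_0 = 1, U_{i+1}/U_i = F(G/U_i)
   (U_{i+1} is the full preimage of F(G/U_i) under the projection mod U_i). *)
Fixpoint ufit (n : nat) G : {set gT} :=
  if n is n'.+1 then coset (ufit n' G) @*^-1 'F(G / ufit n' G) else 1.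

(* Fitting length: the least d with U_d G = G (searched in 0..|G|, which
   suffices for solvable groups). *)
Definition FitL G : nat := find (fun d => ufit d G == G) (iota 0 #|G|.+1).

End Defs.

From mathcomp Require Import all_boot all_fingroup all_solvable.
Set Implicit Arguments.
Unset Strict Implicit.
Unset Printing Implicit Defensive.
Local Open Scope group_scope.

(* Write d = e + 2, U = U_e(G) and V = U_(e+1)(G): then G/V and V/U are
   nilpotent but G/U is not.  By the choice of M, the nilpotent residual
   'L_(M+1)(G) is a normal subgroup X of G with X <= V, X not in U and
   [X, G] = X.  Let K be minimal with these properties, let K/L be a chief
   factor of G with K :&: U <= L, and let H/L = C_(G/L)(K/L).
   Since U_k(X) = X :&: U_k(G) for normal X, FitL K = e + 1.
   If [K, g^G] is not in L, the chief factor gives K = [K, g^G] L, hence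
   K = [K, _i g^G] L for every i; then eta_g(K) is not in U (else K <= UL,
   forcing K <= L by the modular law), so it has the properties above and
   minimality gives eta_g(K) = K.  If h is in H, eta_h(K) <= [K, h^G] <= L,
   so by minimality eta_h(K) <= U, i.e. FitL eta_h(K) <= e.  The same
   argument with the nilpotent V/U in place of g^G shows V <= H, and H <> G
   because [K, G] = K is not in L. *)

Section UpperFitting.
Variable gT : finGroupType.
Implicit Types G N X : {group gT}.

Lemma ufit_group_set k G : group_set (ufit k G).
Proof. by case: k => [|k] /=; [exact: group_set_one | exact: groupP]. Qed.

Canonical ufit_group k G := Group (ufit_group_set k G).

Lemma ufit_normal k G : ufit k G <| G.
Proof.
elim: k => [|k IH]; first exact: normal1.
by have := Fitting_normal (G / ufit k G); rewrite -cosetpre_normal quotientGK.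
Qed.

Lemma ufit_sub k G : ufit k G \subset G.
Proof. exact: normal_sub (ufit_normal k G). Qed.

Lemma ufit_subS k G : ufit k G \subset ufit k.+1 G.
Proof. exact: sub_cosetpre. Qed.

Lemma ufit_char k G : ufit k G \char G.
Proof.
elim: k => [|k IH]; first exact: char1.
have nsUUS := normalS (ufit_subS k G) (ufit_sub _ _) (ufit_normal k G).
apply: (char_from_quotient nsUUS IH).
by rewrite /= cosetpreK Fitting_char.
Qed.

Lemma sub_ufitS k G N :
  N <| G -> (N \subset ufit k.+1 G) = nilpotent (N / ufit k G).
Proof.
move=> nsNG; have nUN := subset_trans (normal_sub nsNG) (normal_norm (ufit_normal k G)).
rewrite /= -sub_quotient_pre //; apply/idP/idP => [sNF | nilN].
  exact: nilpotentS sNF (Fitting_nil _).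
by apply: Fitting_max nilN; apply: quotient_normal.
Qed.

Lemma sub_ufitS_setI k G N :
  N <| G -> (N \subset ufit k.+1 G) = nilpotent (N / (ufit k G :&: N)).
Proof.
move=> nsNG; have nUN := subset_trans (normal_sub nsNG) (normal_norm (ufit_normal k G)).
by rewrite sub_ufitS // (isog_nil (second_isog nUN)).
Qed.

Lemma ufit_normal_setI k G X : X <| G -> ufit k X = X :&: ufit k G.
Proof.
move=> nsXG; elim: k => [|k IH]; first by rewrite /= setIg1.
have nsUG : ufit k.+1 X <| G := char_normal_trans (ufit_char _ _) nsXG.
have nsZG : (X :&: ufit k.+1 G)%G <| G := normalI nsXG (ufit_normal _ _).
have nsZX : (X :&: ufit k.+1 G)%G <| X.
  exact: normalS (subsetIl _ _) (normal_sub nsXG) nsZG.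
apply/eqP; rewrite eqEsubset subsetI ufit_sub andTb; apply/andP; split.
  rewrite sub_ufitS_setI //.
  have -> : ufit k G :&: ufit k.+1 X = ufit k X.
    rewrite -(setIidPr (ufit_sub k.+1 X)) setIA [ufit k G :&: X]setIC -IH.
    exact/setIidPl/ufit_subS.
  by rewrite -sub_ufitS ?ufit_normal.
rewrite (sub_ufitS_setI _ nsZX).
have -> : ufit k X :&: (X :&: ufit k.+1 G) = ufit k G :&: (X :&: ufit k.+1 G).
  by rewrite IH -setIA setICA [X :&: (X :&: _)]setIA setIid.
by rewrite -(sub_ufitS_setI _ nsZG) subsetIr.
Qed.

Lemma ufit_id k G : ufit k G = G -> ufit k.+1 G = G.
Proof.
move=> UG; apply/eqP; rewrite eqEsubset ufit_sub sub_ufitS ?normal_refl //.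
by rewrite UG trivg_quotient nilpotent1.
Qed.

Lemma ufit_id_leq j k G : j <= k -> ufit j G = G -> ufit k G = G.
Proof.
move=> le_jk UG; elim: k le_jk => [|k IH]; first by rewrite leqn0 => /eqP <-.
by rewrite leq_eqVlt => /predU1P[<- // | /IH/ufit_id].
Qed.

Lemma ufit_proper k G :
  solvable G -> ufit k G != G -> ufit k G \proper ufit k.+1 G.
Proof.
move=> solG; apply: contraR; rewrite properEneq ufit_subS andbT negbK => /eqP UUS.
have F1 : 'F(G / ufit k G) = 1.
  rewrite -(cosetpreK 'F(G / ufit k G)).
  by change (ufit k.+1 G / ufit k G = 1); rewrite -UUS trivg_quotient.
have /eqP/trivgP : G / ufit k G :==: 1 by rewrite -trivg_Fitting ?quotient_sol ?F1.
rewrite quotient_sub1 ?normal_norm ?ufit_normal // => sGU.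
by rewrite eqEsubset ufit_sub.
Qed.

Lemma ufit_card_id G : solvable G -> ufit #|G| G = G.
Proof.
move=> solG; suff : ufit #|G| G = G \/ #|G| < #|ufit #|G| G|.
  by rewrite ltnNge subset_leq_card ?ufit_sub // => -[].
elim: #|G| => [|k [UG | lt_k]]; first by right; rewrite cardG_gt0.
  by left; apply: ufit_id.
have [UG | /(ufit_proper solG)/proper_card] := eqVneq (ufit k G) G.
  by left; apply: ufit_id.
by right; apply: leq_ltn_trans lt_k _.
Qed.

Lemma FitL_leq G k : solvable G -> (FitL G <= k) = (ufit k G == G).
Proof.
move=> solG; rewrite /FitL; set P := fun d => _ == _.
have hasP : has P (iota 0 #|G|.+1).
  by apply/hasP; exists #|G|; [rewrite mem_iota add0n ltnSn | rewrite /P ufit_card_id].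
have ltF : find P (iota 0 #|G|.+1) < #|G|.+1.
  by rewrite -[X in _ < X](size_iota 0) -has_find.
apply/idP/eqP => [le_Fk | UG].
  apply: ufit_id_leq le_Fk _; apply/eqP.
  by have := nth_find 0 hasP; rewrite nth_iota.
rewrite leqNgt; apply/negP => /[dup] lt_kF /(before_find 0).
by rewrite nth_iota ?(ltn_trans lt_kF) // /P UG eqxx.
Qed.

Lemma FitL_normal_leq G X k :
  X <| G -> solvable X -> (FitL X <= k) = (X \subset ufit k G).
Proof.
move=> nsXG solX; rewrite FitL_leq // (ufit_normal_setI _ nsXG).
exact: sameP eqP setIidPl.
Qed.

Lemma FitL_leqS_nil G k :
  solvable G -> (FitL G <= k.+1) = nilpotent (G / ufit k G).
Proof. by move=> solG; rewrite (FitL_normal_leq _ (normal_refl G)) ?sub_ufitS. Qed.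

End UpperFitting.

Section IteratedCommutators.
Variable gT : finGroupType.
Implicit Types (A C : {set gT}) (G K L U : {group gT}).

Lemma quotient_nilP (A U : {group gT}) :
  A \subset 'N(U) -> reflect (exists n, 'L_n.+1(A) \subset U) (nilpotent (A / U)).
Proof.
move=> nUA; have nUL n : 'L_n.+1(A) \subset 'N(U) := subset_trans (lcn_sub _ _) nUA.
apply: (iffP (lcnP (A / U)%G)) => -[n Ln1]; exists n.
  by rewrite -quotient_sub1 // /quotient morphim_lcn // -/(quotient _ _) Ln1.
by apply/trivgP; rewrite -quotient_sub1 // /quotient morphim_lcn in Ln1.
Qed.

Lemma itercomm_group_set K C k : group_set (itercomm K C k).
Proof. by case: k => [|k] /=; apply: groupP. Qed.

Canonical itercomm_group K C k := Group (itercomm_group_set K C k).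

Lemma itercomm_sub_lcn A G k : A \subset G -> itercomm A G k \subset 'L_k.+1(G).
Proof. by move=> sAG; elim: k => //= k IH; rewrite lcnSn commSg. Qed.

Lemma itercomm_lcn G k : itercomm G G k = 'L_k.+1(G).
Proof. by elim: k => //= k ->. Qed.

Lemma commMG_sub G (Y : {group gT}) L C :
  L <| G -> Y \subset G -> C \subset G -> [~: Y * L, C] \subset [~: Y, C] * L.
Proof.
move=> nsLG sYG sCG; have nLG := normal_norm nsLG.
rewrite -[[~: Y, C] * L]norm_joinEl ?(subset_trans (comm_subG sYG sCG)) // gen_subG.
apply/subsetP=> _ /imset2P[_ c /mulsgP[y l Yy Ll ->] Cc ->].
have RLl : l \in [~: Y, C] <*> L by rewrite (subsetP (joing_subr _ _)).
rewrite commMgJ groupM ?groupJ //.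
  by rewrite (subsetP (joing_subl _ _)) ?mem_commg.
rewrite (subsetP (joing_subr _ _)) // commgEl groupM ?groupV //.
by rewrite memJ_norm // (subsetP nLG) // (subsetP sCG).
Qed.

Section NormalItercomm.
Variables (G K : {group gT}) (C : {set gT}).
Hypotheses (nsKG : K <| G) (nsCG : C <| G).

Lemma itercomm_normal k : itercomm K C k <| G.
Proof.
elim: k => //= k IH; apply/andP; split.
  by rewrite comm_subG ?normal_sub.
by rewrite normsR ?normal_norm.
Qed.

Lemma itercommSn_sub k : itercomm K C k.+1 \subset itercomm K C k.
Proof.
change ([~: itercomm K C k, C] \subset itercomm K C k).
apply: subset_trans (commgS _ (normal_sub nsCG)) _.
by rewrite commg_subl normal_norm ?itercomm_normal.
Qed.

Lemma itercomm_sub_leq j k : j <= k -> itercomm K C k \subset itercomm K C j.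
Proof.
elim: k => [|k IH]; first by rewrite leqn0 => /eqP ->.
rewrite leq_eqVlt => /predU1P[-> // | /IH].
exact: subset_trans (itercommSn_sub k).
Qed.

Lemma itercomm_mul_sub L :
  L <| G -> K \subset [~: K, C] * L -> forall i, K \subset itercomm K C i * L.
Proof.
move=> nsLG sK_KCL; elim=> [|i IH]; first exact: mulG_subl.
apply: subset_trans sK_KCL _; rewrite -{2}(mulGid L) mulgA mulSg //.
apply: subset_trans (commSg C IH) (commMG_sub nsLG _ (normal_sub nsCG)).
exact: normal_sub (itercomm_normal i).
Qed.

End NormalItercomm.
End IteratedCommutators.

Section ChiefFactors.
Variable gT : finGroupType.
Implicit Types (A C : {set gT}) (G K L N U : {group gT}).

Lemma sub_mul_modular K L U :
  L \subset K -> K :&: U \subset L -> U \subset 'N(L) -> K \subset U * L -> K \subset L.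
Proof.
move=> sLK sKU_L nLU sK_UL.
apply: subset_trans (_ : K \subset L * (U :&: K)) _.
  by rewrite group_modl // subsetI subxx andbT -(normC nLU).
by rewrite mul_subG // setIC.
Qed.

Definition factor_cent G K L := coset L @*^-1 'C_(G / L)(K / L).

Canonical factor_cent_group G K L := Eval hnf in [group of factor_cent G K L].

Section FactorCentraliser.
Variables G K L : {group gT}.
Hypotheses (nsKG : K <| G) (nsLG : L <| G).

Lemma factor_cent_normal : factor_cent G K L <| G.
Proof.
rewrite /factor_cent -{2}(quotientGK nsLG) cosetpre_normal.
have := subcent_normal (G / L) (K / L).
by rewrite (setIidPl (quotient_norms L (normal_norm nsKG))).
Qed.

Lemma sub_factor_cent A :
  A \subset G -> (A \subset factor_cent G K L) = ([~: K, A] \subset L).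
Proof.
move=> sAG; have nLG := normal_norm nsLG.
rewrite -sub_quotient_pre ?(subset_trans sAG) // subsetI quotientS //=.
have nLK := subset_trans (normal_sub nsKG) nLG.
by rewrite quotient_cents2 ?(subset_trans sAG) // commGC.
Qed.

Lemma mem_factor_cent g :
  g \in G -> (g \in factor_cent G K L) = ([~: K, g ^: G] \subset L).
Proof.
move=> Gg; rewrite -(sub_factor_cent (class_subG Gg (subxx G))).
by rewrite class_sub_norm ?normal_norm ?factor_cent_normal.
Qed.

End FactorCentraliser.

Section ChiefFactor.
Variables G K L : {group gT}.
Hypotheses (nsKG : K <| G) (maxL : maxnormal L K G).

Lemma chief_proper : L \proper K.
Proof. by case/andP: (maxgroupp maxL). Qed.

Lemma chief_normal : L <| G.
Proof.
case/andP: (maxgroupp maxL) => /proper_sub sLK nLG.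
by rewrite /normal nLG (subset_trans sLK) ?normal_sub.
Qed.

Lemma chief_mul_sub N : N <| G -> N \subset K -> ~~ (N \subset L) -> K \subset N * L.
Proof.
move=> nsNG sNK; have nsNLG := normalY nsNG chief_normal.
rewrite -norm_joinEr ?(subset_trans (normal_sub chief_normal)) ?normal_norm //.
apply: contraR => nsKNL.
have prNLK : N <*> L \proper K.
  by rewrite properE join_subG sNK (proper_sub chief_proper) nsKNL.
have eqNLL := (maxgroupP maxL).2 (N <*> L)%G.
by rewrite -(eqNLL _ (joing_subr _ _)) ?joing_subl ?prNLK ?normal_norm.
Qed.

Lemma chief_itercomm_mul_sub C :
  C <| G -> ~~ ([~: K, C] \subset L) -> forall i, K \subset itercomm K C i * L.
Proof.
move=> nsCG nsKC_L; apply: (itercomm_mul_sub nsKG nsCG chief_normal).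
have sKCK := itercomm_sub_leq nsKG nsCG (leq0n 1).
exact: chief_mul_sub (itercomm_normal nsKG nsCG 1) sKCK nsKC_L.
Qed.

End ChiefFactor.
End ChiefFactors.

Section FittingResidual.
Variables (gT : finGroupType) (G U V : {group gT}) (M : nat).
Hypothesis hM : forall X Y : {set gT}, Gnormal_set G X -> Gnormal_set G Y ->
  forall i, M <= i -> itercomm X Y i = itercomm X Y M.
Hypotheses (nsUG : U <| G) (nsVG : V <| G).
Hypotheses (nilGV : nilpotent (G / V)) (nilVU : nilpotent (V / U)).
Hypothesis nnilGU : ~~ nilpotent (G / U).

Definition candidate (X : {set gT}) :=
  [&& X <| G, X \subset V, ~~ (X \subset U) & [~: X, G] == X].

Lemma M_gt0 : 0 < M.
Proof.
case: M hM => // hM0; move: nnilGU.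
have := @hM0 G 1 (normal_refl G) (normal1 G) 1%N isT.
by rewrite /= commG1 => <-; rewrite quotient1 nilpotent1.
Qed.

Lemma lcn_stable i : M <= i -> 'L_i.+1(G) = 'L_M.+1(G).
Proof.
by move=> le_Mi; rewrite -!itercomm_lcn (hM (normal_refl G) (normal_refl G) le_Mi).
Qed.

Lemma candidate_lcn : candidate 'L_M.+1(G).
Proof.
have /(quotient_nilP (normal_norm nsVG))[n sLnV] := nilGV.
apply/and4P; split; first exact: lcn_normal.
- rewrite -(lcn_stable (leq_addr n M)); apply: subset_trans sLnV.
  by rewrite lcn_sub_leq // ltnS leq_addl.
- by apply: contra nnilGU => sLU; apply/(quotient_nilP (normal_norm nsUG)); exists M.
- by rewrite -lcnSn lcn_stable.
Qed.

Lemma itercomm_perfect (K : {group gT}) (C : {set gT}) :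
  K <| G -> C <| G -> [~: itercomm K C M, G] = itercomm K C M.
Proof.
move=> nsKG nsCG; have nsYG := itercomm_normal nsKG nsCG M.
apply/eqP; rewrite eqEsubset commg_subl normal_norm //=.
by rewrite -{1}(hM nsKG nsCG (leqnSn M)) commgS ?normal_sub.
Qed.

Section MinimalCandidate.
Variables K L : {group gT}.
Hypotheses (minK : [min K of X | candidate X]) (maxL : maxnormal L K G).
Hypothesis sKUL : K :&: U \subset L.

Let candK : candidate K := mingroupp minK.
Let nsKG : K <| G. Proof. by case/and4P: candK. Qed.
Let sKV : K \subset V. Proof. by case/and4P: candK. Qed.
Let perfectK : [~: K, G] = K. Proof. by case/and4P: candK => _ _ _ /eqP. Qed.
Let nsLG : L <| G := chief_normal nsKG maxL.

Lemma candidate_min (Y : {group gT}) :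
  Y <| G -> Y \subset K -> [~: Y, G] = Y -> ~~ (Y \subset U) -> Y :=: K.
Proof.
move=> nsYG sYK perfY nsYU; apply: (mingroupP minK).2 => //.
by rewrite /candidate nsYG (subset_trans sYK sKV) nsYU perfY eqxx.
Qed.

Lemma not_sub_mulUL : ~~ (K \subset U * L).
Proof.
have sLK := proper_sub (chief_proper maxL).
have nLU := subset_trans (normal_sub nsUG) (normal_norm nsLG).
by apply: contra (proper_subn (chief_proper maxL)); apply: sub_mul_modular.
Qed.

Lemma eta_fixed g :
  g \in G -> ~~ ([~: K, g ^: G] \subset L) -> itercomm K (g ^: G) M = K.
Proof.
move=> Gg nsKC_L; have nsCG := class_normal Gg.
have sK_YL := chief_itercomm_mul_sub nsKG maxL nsCG nsKC_L M.
have sYK : itercomm K (g ^: G) M \subset K := itercomm_sub_leq nsKG nsCG (leq0n M).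
apply: (candidate_min (itercomm_normal nsKG nsCG M) sYK (itercomm_perfect nsKG nsCG)).
by apply: contra not_sub_mulUL => sYU; apply: subset_trans sK_YL (mulSg _ sYU).
Qed.

Lemma eta_sub h :
  h \in G -> [~: K, h ^: G] \subset L -> itercomm K (h ^: G) M \subset U.
Proof.
move=> Gh sKC_L; have nsCG := class_normal Gh; apply/idPn => nsYU.
have eqYK := candidate_min (itercomm_normal nsKG nsCG M)
  (itercomm_sub_leq nsKG nsCG (leq0n M)) (itercomm_perfect nsKG nsCG) nsYU.
have := subset_trans (itercomm_sub_leq nsKG nsCG M_gt0) sKC_L.
by rewrite eqYK (negPf (proper_subn (chief_proper maxL))).
Qed.

Lemma sub_factor_cent_V : V \subset factor_cent G K L.
Proof.
rewrite (sub_factor_cent nsKG nsLG (normal_sub nsVG)); apply/idPn => nsKV_L.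
have nUV := subset_trans (normal_sub nsVG) (normal_norm nsUG).
have /(quotient_nilP nUV)[n sLnU] := nilVU.
apply: (negP not_sub_mulUL).
apply: subset_trans (chief_itercomm_mul_sub nsKG maxL nsVG nsKV_L n) _.
by rewrite mulSg // (subset_trans (itercomm_sub_lcn n sKV)).
Qed.

Lemma factor_cent_neq : factor_cent G K L != G.
Proof.
apply: contraNneq (proper_subn (chief_proper maxL)) => eqHG.
by rewrite -{1}perfectK -(sub_factor_cent nsKG nsLG (subxx G)) eqHG.
Qed.

End MinimalCandidate.

Lemma fitting_residual_chief_factor :
  exists K H : {group gT},
    [/\ K <| G, K \subset V, ~~ (K \subset U), H <| G & V \subset H] /\
    [/\ H :!=: G, forall g, g \in G :\: H -> eta M G g K = K &
        forall h, h \in H -> eta M G h K \subset U].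
Proof.
have [K minK _] :=
  @mingroup_exists _ (fun X : {group gT} => candidate X) _ candidate_lcn.
have [nsKG sKV nsKU _] := and4P (mingroupp minK).
have [L maxL sKUL] : {L : {group gT} | maxnormal L K G & (K :&: U)%G \subset L}.
  apply: maxgroup_exists.
  by rewrite properE subsetIl subsetI subxx nsKU normsI ?normal_norm.
have nsLG := chief_normal nsKG maxL; have nsHG := factor_cent_normal nsKG nsLG.
exists K, (factor_cent G K L)%G; split.
  split=> //; exact: (sub_factor_cent_V minK maxL sKUL).
split; first exact: (factor_cent_neq minK maxL).
  move=> g /setDP[Gg Hg]; apply: (eta_fixed minK maxL sKUL Gg).
  by rewrite -(mem_factor_cent nsKG nsLG Gg).
move=> h Hh; have Gh := subsetP (normal_sub nsHG) h Hh.
by apply: (eta_sub minK maxL Gh); rewrite -(mem_factor_cent nsKG nsLG Gh).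
Qed.

End FittingResidual.

Unset Implicit Arguments.

Theorem lemma5p1 (gT : finGroupType) (G : {group gT}) (M : nat)
  (hM : forall X Y : {set gT}, Gnormal_set G X -> Gnormal_set G Y ->
        forall i, (M <= i)%N -> itercomm X Y i = itercomm X Y M)
  (d : nat) :
  solvable G -> ~~ nilpotent G -> FitL G = d ->
  exists K H : {group gT},
    [/\ K <| G, H <| G, K \subset H & H :!=: G] /\
    [/\ FitL K = d.-1, ufit d.-1 G \subset H,
        (forall g, g \in G :\: H -> eta M G g K = K) &
        (forall h, h \in H -> (FitL (eta M G h K) < FitL K)%N)].
Proof.
move=> solG nnilG FitLd; have nilFitL := FitL_leqS_nil _ solG.
have solN (X : {group gT}) : X <| G -> solvable X.
  by move=> nsXG; apply: solvableS (normal_sub nsXG) solG.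
have [e de] : exists e, d = e.+2.
  move: nnilG; rewrite (isog_nil (quotient1_isog G)) -[1%g]/(ufit 0 G).
  by rewrite -nilFitL FitLd; case: d {FitLd} => [|[|e]] // _; exists e.
rewrite {}de in FitLd *.
have nilGV : nilpotent (G / ufit e.+1 G) by rewrite -nilFitL FitLd.
have nilVU : nilpotent (ufit e.+1 G / ufit e G) by rewrite -sub_ufitS ?ufit_normal.
have nnilGU : ~~ nilpotent (G / ufit e G) by rewrite -nilFitL FitLd ltnn.
have [K [H [[nsKG sKV nsKU nsHG sVH] [neHG etaK etaH]]]] :=
  fitting_residual_chief_factor hM (ufit_normal e G) (ufit_normal e.+1 G)
    nilGV nilVU nnilGU.
have FitLK : FitL K = e.+1.
  by apply/eqP; rewrite eqn_leq ltnNge !(FitL_normal_leq _ nsKG) ?solN // sKV nsKU.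
exists K, H; split; first by rewrite nsKG nsHG (subset_trans sKV sVH) neHG.
split=> // h Hh; have Gh := subsetP (normal_sub nsHG) h Hh.
have nsEG := itercomm_normal nsKG (class_normal Gh) M.
by rewrite FitLK ltnS (FitL_normal_leq _ nsEG) ?solN ?etaH.
Qed.
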